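(* Let $(X,d)$ be a complete metric space, $\preceq$ a partial order on $X$, and $F:X\times X\rightarrow X$ such that for every $\varepsilon>0$ there exists $\delta(\varepsilon)>0$ for which, for all $x,y,u,v\in X$, \[ x\preceq u,\ y\succeq v,\ \varepsilon\leq\tfrac{1}{2}[d(x,u)+d(y,v)]<\varepsilon+\delta(\varepsilon)\Rightarrow d(F(x,y),F(u,v))<\varepsilon. \] Suppose: (H1) $F$ has the mixed monotone property; (H2) there exist $x_{0},y_{0}\in X$ with $x_{0}\preceq F(x_{0},y_{0})$ and $y_{0}\succeq F(y_{0},x_{0})$. If either (H3) $F$ is continuous, or (H4) whenever $\{x_{n}\}$ is a nondecreasing (respectively, nonincreasing) sequence in $X$ with $x_{n}\rightarrow x$, then $x_{n}\preceq x$ (respectively, $x_{n}\succeq x$) for all $n$, then $F$ has a coupled fixed point $(x^{\ast},y^{\ast})$, i.e., $F(x^{\ast},y^{\ast})=x^{\ast}$ and $F(y^{\ast},x^{\ast})=y^{\ast}$. If in addition (H5) $X$ is $\preceq$--connected, then $x^{\ast}=y^{\ast}$, $(x^{\ast},x^{\ast})$ is the unique coupled fixed point of $F$, $x^{\ast}$ is the unique fixed point of $F$ (unique $x$ with $F(x,x)=x$), and $F^{n}(x,y)\rightarrow x^{\ast}$ as $n\rightarrow\infty$ for all $x,y\in X$.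
   Context: $F$ has the mixed monotone property if for all $x_1,x_2,y_1,y_2\in X$, $x_1\preceq x_2$ and $y_1\succeq y_2$ imply $F(x_1,y_1)\preceq F(x_2,y_2)$. $X$ is $\preceq$--connected if for every $x,y\in X$ there exist $z_0,\dots,z_n\in X$ with $z_0=x$, $z_n=y$ and $z_{i-1},z_i$ comparable (i.e., $z_{i-1}\preceq z_i$ or $z_i\preceq z_{i-1}$) for every $i\in\{1,\dots,n\}$. Iterates of $F$: with $(G\ast H)(x,y)=G(H(x,y),H(y,x))$ for $G,H:X\times X\to X$, set $F^{0}(x,y)=x$ and $F^{n+1}=F\ast F^{n}$. *)

From Stdlib Require Import Reals.
Open Scope R_scope.

Section Defs.
Variable X : Type.

Definition is_metric (d : X -> X -> R) : Prop :=
  (forall x y, d x y = 0 <-> x = y) /\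
  (forall x y, d x y = d y x) /\
  (forall x y z, d x z <= d x y + d y z).

Definition cauchy_seq (d : X -> X -> R) (u : nat -> X) : Prop :=
  forall eps, 0 < eps -> exists N, forall m n, (N <= m)%nat -> (N <= n)%nat ->
    d (u m) (u n) < eps.

Definition seq_converges (d : X -> X -> R) (u : nat -> X) (l : X) : Prop :=
  forall eps, 0 < eps -> exists N, forall n, (N <= n)%nat -> d (u n) l < eps.

Definition complete_metric (d : X -> X -> R) : Prop :=
  forall u, cauchy_seq d u -> exists l, seq_converges d u l.

Definition partial_order (le : X -> X -> Prop) : Prop :=
  (forall x, le x x) /\
  (forall x y, le x y -> le y x -> x = y) /\
  (forall x y z, le x y -> le y z -> le x z).

Definition mixed_monotone (le : X -> X -> Prop) (F : X -> X -> X) : Prop :=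
  forall x1 x2 y1 y2, le x1 x2 -> le y2 y1 -> le (F x1 y1) (F x2 y2).

Definition continuous2 (d : X -> X -> R) (F : X -> X -> X) : Prop :=
  forall x y eps, 0 < eps -> exists delta, 0 < delta /\
    forall u v, d x u < delta -> d y v < delta -> d (F x y) (F u v) < eps.

Definition comparable (le : X -> X -> Prop) (x y : X) : Prop := le x y \/ le y x.

Definition order_connected (le : X -> X -> Prop) : Prop :=
  forall x y, exists (n : nat) (z : nat -> X),
    z 0%nat = x /\ z n = y /\
    forall i, (1 <= i <= n)%nat -> comparable le (z (i - 1)%nat) (z i).

Fixpoint Fiter (F : X -> X -> X) (n : nat) : X -> X -> X :=
  match n with
  | O => fun x _ => x
  | S m => fun x y => F (Fiter F m x y) (Fiter F m y x)
  end.

Definition coupled_fixed_point (F : X -> X -> X) (x y : X) : Prop :=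
  F x y = x /\ F y x = y.

End Defs.

From Stdlib Require Import Reals Lra Lia.
Open Scope R_scope.

(* Pass to [X * X] with the averaged metric and the order (x, y) <= (u, v) iff
   x <= u and y >= v.  The coupled map G (x, y) = (F (x, y), F (y, x)) is
   monotone and satisfies the Meir-Keeler condition on comparable pairs, and
   its fixed points are the coupled fixed points of F.  Along the G-orbits of
   two comparable points the distance decreases and, by the Meir-Keeler
   condition, cannot stall at a positive value, so it tends to 0; this makes
   the orbit of (x0, y0) Cauchy, and under (H3) or (H4) its limit is fixed.
   When X is order-connected, any two pairs are joined by a chain of
   comparable pairs, so all G-orbits are asymptotic: this gives uniqueness,
   the symmetry of the fixed point (its swap is fixed too) and global
   convergence. *)

Section Metric.
Variables (Y : Type) (D : Y -> Y -> R).
Hypothesis HD : is_metric Y D.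

Lemma metric_self p : D p p = 0.
Proof. apply (proj1 HD). reflexivity. Qed.

Lemma metric_sym p q : D p q = D q p.
Proof. apply (proj1 (proj2 HD)). Qed.

Lemma metric_triangle p q r : D p r <= D p q + D q r.
Proof. apply (proj2 (proj2 HD)). Qed.

Lemma metric_nonneg p q : 0 <= D p q.
Proof.
  pose proof (metric_triangle p q p). rewrite metric_self, (metric_sym q p) in H. lra.
Qed.

Lemma metric_small_eq p q : (forall eps, 0 < eps -> D p q < eps) -> p = q.
Proof.
  intros H. apply (proj1 HD). destruct (metric_nonneg p q) as [Hlt|Heq]; [|auto].
  specialize (H _ Hlt). lra.
Qed.

Lemma seq_converges_unique u a b :
  seq_converges Y D u a -> seq_converges Y D u b -> a = b.
Proof.
  intros Ha Hb. apply metric_small_eq. intros eps Heps.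
  destruct (Ha (eps / 2)) as [Na HNa]; [lra|].
  destruct (Hb (eps / 2)) as [Nb HNb]; [lra|].
  specialize (HNa _ (Nat.le_max_l Na Nb)). specialize (HNb _ (Nat.le_max_r Na Nb)).
  pose proof (metric_triangle a (u (max Na Nb)) b). rewrite (metric_sym a (u _)) in H. lra.
Qed.

Lemma seq_converges_succ u l :
  seq_converges Y D u l -> seq_converges Y D (fun n => u (S n)) l.
Proof. intros H eps Heps. destruct (H eps Heps) as [N HN]. exists N. auto. Qed.

End Metric.

Lemma decreasing_cv_0_of_meir_keeler (a : nat -> R) :
  (forall n, a (S n) <= a n) -> (forall n, 0 <= a n) ->
  (forall l, 0 < l -> exists delta, 0 < delta /\
     forall n, l <= a n < l + delta -> a (S n) < l) ->
  Un_cv a 0.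
Proof.
  intros Hdec Hpos Hmk.
  assert (Hlb : has_lb a) by (exists 0; intros x [n ->]; unfold opp_seq; specialize (Hpos n); lra).
  destruct (decreasing_cv a Hdec Hlb) as [l Hl].
  pose proof (decreasing_ineq a l Hdec Hl) as Hge.
  destruct (Rtotal_order l 0) as [Hneg|[->|Hposl]]; [exfalso| exact Hl |exfalso].
  - destruct (Hl (- l)) as [N HN]; [lra|]. specialize (HN N (le_n N)).
    unfold R_dist in HN. apply Rabs_def2 in HN. specialize (Hpos N). lra.
  - destruct (Hmk l Hposl) as [delta [Hdelta Hstep]].
    destruct (Hl delta Hdelta) as [N HN]. specialize (HN N (le_n N)).
    unfold R_dist in HN. apply Rabs_def2 in HN.
    specialize (Hstep N ltac:(specialize (Hge N); lra)). specialize (Hge (S N)). lra.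
Qed.


Definition meir_keeler (Y : Type) (D : Y -> Y -> R) (Rel : Y -> Y -> Prop)
  (T : Y -> Y) : Prop :=
  forall eps, 0 < eps -> exists delta, 0 < delta /\
    forall p q, comparable Y Rel p q -> eps <= D p q < eps + delta ->
      D (T p) (T q) < eps.

Definition asymptotic (Y : Type) (D : Y -> Y -> R) (T : Y -> Y) (p q : Y) : Prop :=
  forall eps, 0 < eps -> exists N, forall n, (N <= n)%nat ->
    D (Nat.iter n T p) (Nat.iter n T q) < eps.

Definition continuous_map (Y : Type) (D : Y -> Y -> R) (T : Y -> Y) : Prop :=
  forall p eps, 0 < eps -> exists delta, 0 < delta /\
    forall q, D p q < delta -> D (T p) (T q) < eps.

Definition nondecreasing_limits_above (Y : Type) (D : Y -> Y -> R)
  (Rel : Y -> Y -> Prop) : Prop :=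
  forall u l, (forall n, Rel (u n) (u (S n))) -> seq_converges Y D u l ->
    forall n, Rel (u n) l.

Section MeirKeeler.
Variables (Y : Type) (D : Y -> Y -> R) (Rel : Y -> Y -> Prop) (T : Y -> Y).
Hypothesis HD : is_metric Y D.
Hypothesis Hrefl : forall p, Rel p p.
Hypothesis Htrans : forall p q r, Rel p q -> Rel q r -> Rel p r.
Hypothesis Hmono : forall p q, Rel p q -> Rel (T p) (T q).
Hypothesis Hmk : meir_keeler Y D Rel T.

Lemma comparable_iter n p q :
  comparable Y Rel p q -> comparable Y Rel (Nat.iter n T p) (Nat.iter n T q).
Proof.
  intros [H|H]; [left|right]; induction n; simpl; auto.
Qed.

Lemma dist_map_comparable p q :
  comparable Y Rel p q -> D (T p) (T q) <= D p q.
Proof.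
  intros Hpq. destruct (metric_nonneg Y D HD p q) as [Hlt|Heq].
  - destruct (Hmk _ Hlt) as [delta [Hdelta Hstep]].
    left. apply Hstep; auto. lra.
  - assert (p = q) by (apply (proj1 HD); auto). subst.
    rewrite !(metric_self Y D HD). lra.
Qed.

Lemma asymptotic_comparable p q : comparable Y Rel p q -> asymptotic Y D T p q.
Proof.
  intros Hpq eps Heps.
  set (a n := D (Nat.iter n T p) (Nat.iter n T q)).
  assert (Hcv : Un_cv a 0).
  { apply decreasing_cv_0_of_meir_keeler.
    - intro n. apply dist_map_comparable, comparable_iter, Hpq.
    - intro n. apply (metric_nonneg Y D HD).
    - intros l Hl. destruct (Hmk l Hl) as [delta [Hdelta Hstep]].
      exists delta. split; [exact Hdelta|]. intros n Hn.
      apply Hstep; [apply comparable_iter, Hpq | exact Hn]. }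
  destruct (Hcv eps Heps) as [N HN]. exists N. intros n Hn.
  specialize (HN n Hn). unfold R_dist in HN. apply Rabs_def2 in HN. unfold a in HN. lra.
Qed.

Lemma asymptotic_refl p : asymptotic Y D T p p.
Proof. intros eps Heps. exists O. intros n _. rewrite (metric_self Y D HD). exact Heps. Qed.

Lemma asymptotic_trans p q r :
  asymptotic Y D T p q -> asymptotic Y D T q r -> asymptotic Y D T p r.
Proof.
  intros Hpq Hqr eps Heps.
  destruct (Hpq (eps / 2)) as [N1 HN1]; [lra|].
  destruct (Hqr (eps / 2)) as [N2 HN2]; [lra|].
  exists (max N1 N2). intros n Hn.
  specialize (HN1 n ltac:(lia)). specialize (HN2 n ltac:(lia)).
  pose proof (metric_triangle Y D HD (Nat.iter n T p) (Nat.iter n T q) (Nat.iter n T r)).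
  lra.
Qed.

Lemma orbit_above p : Rel p (T p) -> forall k, Rel p (Nat.iter k T p).
Proof.
  intros Hp k. apply Nat.iter_ind; [apply Hrefl|].
  intros n x Hx. apply Htrans with (T p); auto.
Qed.

(* The Meir-Keeler condition prevents the orbit from leaving the ball of radius
   [eps + delta] around [p] once a single step is shorter than [delta]. *)
Lemma orbit_stays_close eps delta p :
  0 < eps -> 0 < delta ->
  (forall p q, comparable Y Rel p q -> eps <= D p q < eps + delta ->
     D (T p) (T q) < eps) ->
  Rel p (T p) -> D p (T p) < delta ->
  forall k, D p (Nat.iter k T p) < eps + delta.
Proof.
  intros Heps Hdelta Hstep Hp Hstep1 k. induction k as [|k IH].
  - simpl. rewrite (metric_self Y D HD). lra.
  - assert (Hcmp : comparable Y Rel p (Nat.iter k T p)) by (left; apply orbit_above, Hp).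
    assert (Hnext : D (T p) (T (Nat.iter k T p)) < eps).
    { destruct (Rle_or_lt eps (D p (Nat.iter k T p))).
      - apply Hstep; [exact Hcmp | lra].
      - pose proof (dist_map_comparable _ _ Hcmp). lra. }
    pose proof (metric_triangle Y D HD p (T p) (Nat.iter (S k) T p)). simpl in *. lra.
Qed.

Lemma orbit_cauchy p : Rel p (T p) -> cauchy_seq Y D (fun n => Nat.iter n T p).
Proof.
  intros Hp eps Heps.
  destruct (Hmk (eps / 4)) as [delta [Hdelta Hstep]]; [lra|].
  set (r := Rmin delta (eps / 4)).
  assert (Hr : 0 < r) by (apply Rmin_glb_lt; lra).
  assert (Hr_delta : r <= delta) by apply Rmin_l.
  assert (Hr_eps : r <= eps / 4) by apply Rmin_r.
  destruct (asymptotic_comparable p (T p) (or_introl Hp) r Hr) as [N HN].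
  specialize (HN N (le_n N)). rewrite <- Nat.iter_succ_r, Nat.iter_succ in HN.
  assert (Hclose : forall k, D (Nat.iter N T p) (Nat.iter (k + N) T p) < eps / 4 + r).
  { intro k. rewrite Nat.iter_add. apply orbit_stays_close; auto; try lra.
    - intros x y Hxy Hb. apply Hstep; auto. lra.
    - apply (Nat.iter_invariant N _ _ (fun x => Rel x (T x))); auto. }
  exists N. intros m n Hm Hn.
  pose proof (Hclose (m - N)%nat) as Hm'. pose proof (Hclose (n - N)%nat) as Hn'.
  replace (m - N + N)%nat with m in Hm' by lia. replace (n - N + N)%nat with n in Hn' by lia.
  pose proof (metric_triangle Y D HD (Nat.iter m T p) (Nat.iter N T p) (Nat.iter n T p)).
  rewrite (metric_sym Y D HD (Nat.iter N T p)) in Hm'. lra.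
Qed.


Lemma map_converges_continuous u l :
  continuous_map Y D T -> seq_converges Y D u l ->
  seq_converges Y D (fun n => T (u n)) (T l).
Proof.
  intros Hcont Hu eps Heps.
  destruct (Hcont l eps Heps) as [delta [Hdelta Hball]].
  destruct (Hu delta Hdelta) as [N HN]. exists N. intros n Hn.
  rewrite (metric_sym Y D HD). apply Hball. rewrite (metric_sym Y D HD). auto.
Qed.

Lemma map_converges_comparable u l :
  (forall n, comparable Y Rel (u n) l) -> seq_converges Y D u l ->
  seq_converges Y D (fun n => T (u n)) (T l).
Proof.
  intros Hcmp Hu eps Heps. destruct (Hu eps Heps) as [N HN]. exists N. intros n Hn.
  pose proof (dist_map_comparable _ _ (Hcmp n)). specialize (HN n Hn). lra.
Qed.

Lemma orbit_limit_fixed p l :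
  seq_converges Y D (fun n => Nat.iter n T p) l ->
  seq_converges Y D (fun n => T (Nat.iter n T p)) (T l) -> T l = l.
Proof.
  intros Hl HTl. apply (seq_converges_unique Y D HD (fun n => Nat.iter (S n) T p)).
  - exact HTl.
  - exact (seq_converges_succ Y D _ _ Hl).
Qed.

Theorem exists_fixed_point p :
  complete_metric Y D ->
  continuous_map Y D T \/ nondecreasing_limits_above Y D Rel ->
  Rel p (T p) -> exists l, T l = l.
Proof.
  intros Hcomplete Hreg Hp.
  destruct (Hcomplete _ (orbit_cauchy p Hp)) as [l Hl].
  exists l. apply (orbit_limit_fixed p); [exact Hl|].
  destruct Hreg as [Hcont | Hlim].
  - exact (map_converges_continuous _ _ Hcont Hl).
  - apply map_converges_comparable; [|exact Hl].
    intro n. left. apply Hlim; [|exact Hl].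
    intro k. apply (Nat.iter_invariant k _ _ (fun x => Rel x (T x))); auto.
Qed.

Lemma iter_fixed n p : T p = p -> Nat.iter n T p = p.
Proof. intro Hp. induction n as [|n IH]; simpl; [reflexivity|]. rewrite IH. exact Hp. Qed.

Lemma asymptotic_fixed_points_eq p q :
  asymptotic Y D T p q -> T p = p -> T q = q -> p = q.
Proof.
  intros Hpq Hp Hq. apply (metric_small_eq Y D HD). intros eps Heps.
  destruct (Hpq eps Heps) as [N HN]. specialize (HN N (le_n N)).
  rewrite !iter_fixed in HN; assumption.
Qed.

Lemma asymptotic_fixed_point_converges p q :
  asymptotic Y D T p q -> T q = q -> seq_converges Y D (fun n => Nat.iter n T p) q.
Proof.
  intros Hpq Hq eps Heps. destruct (Hpq eps Heps) as [N HN]. exists N. intros n Hn.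
  specialize (HN n Hn). rewrite (iter_fixed n q Hq) in HN. exact HN.
Qed.
End MeirKeeler.


Lemma order_connected_total (Y : Type) (Rel E : Y -> Y -> Prop) :
  order_connected Y Rel ->
  (forall p, E p p) -> (forall p q r, E p q -> E q r -> E p r) ->
  (forall p q, comparable Y Rel p q -> E p q) ->
  forall p q, E p q.
Proof.
  intros Hconn Erefl Etrans Hcmp p q.
  destruct (Hconn p q) as [n [z [Hz0 [Hzn Hchain]]]]. subst p q.
  assert (Hprefix : forall i, (i <= n)%nat -> E (z 0%nat) (z i)).
  { induction i as [|i IH]; intros Hi; [apply Erefl|].
    apply Etrans with (z i); [apply IH; lia|].
    apply Hcmp. specialize (Hchain (S i) ltac:(lia)).
    replace (S i - 1)%nat with i in Hchain by lia. exact Hchain. }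
  apply Hprefix. lia.
Qed.

Section Pairs.
Variables (X : Type) (d : X -> X -> R) (le : X -> X -> Prop) (F : X -> X -> X).

Definition pair_dist (p q : X * X) : R := (d (fst p) (fst q) + d (snd p) (snd q)) / 2.

Definition pair_le (p q : X * X) : Prop := le (fst p) (fst q) /\ le (snd q) (snd p).

Definition coupled_map (p : X * X) : X * X := (F (fst p) (snd p), F (snd p) (fst p)).

Definition coupled_meir_keeler : Prop :=
  forall eps, 0 < eps -> exists delta, 0 < delta /\
    forall x y u v, le x u -> le v y ->
      eps <= (d x u + d y v) / 2 < eps + delta ->
      d (F x y) (F u v) < eps.

Lemma iter_coupled_map n x y :
  Nat.iter n coupled_map (x, y) = (Fiter X F n x y, Fiter X F n y x).
Proof. induction n as [|n IH]; simpl; [reflexivity|]. rewrite IH. reflexivity. Qed.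

Lemma order_connected_pair_total (E : X * X -> X * X -> Prop) :
  (forall x, le x x) -> order_connected X le ->
  (forall p, E p p) -> (forall p q r, E p q -> E q r -> E p r) ->
  (forall p q, comparable (X * X) pair_le p q -> E p q) ->
  forall p q, E p q.
Proof.
  intros Hrefl Hconn Erefl Etrans Hcmp [x y] [u v].
  apply Etrans with (u, y).
  - apply (order_connected_total X le (fun a b => E (a, y) (b, y))); auto.
    { intros a b c. apply Etrans. }
    intros a b Hab. apply Hcmp. destruct Hab; [left|right]; split; simpl; auto.
  - apply (order_connected_total X le (fun a b => E (u, a) (u, b))); auto.
    { intros a b c. apply Etrans. }
    intros a b Hab. apply Hcmp. destruct Hab; [right|left]; split; simpl; auto.
Qed.

Lemma pair_le_refl : partial_order X le -> forall p, pair_le p p.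
Proof. intros [Hrefl _] p. split; apply Hrefl. Qed.

Lemma pair_le_trans : partial_order X le -> forall p q r, pair_le p q -> pair_le q r -> pair_le p r.
Proof. intros [_ [_ Htrans]] p q r [H1 H2] [H3 H4]. split; eauto. Qed.

Lemma coupled_map_monotone :
  mixed_monotone X le F -> forall p q, pair_le p q -> pair_le (coupled_map p) (coupled_map q).
Proof. intros Hmono p q [H1 H2]. split; apply Hmono; auto. Qed.

Section PairMetric.
Hypothesis Hd : is_metric X d.

Lemma dist_fst_le_pair_dist p q : d (fst p) (fst q) <= 2 * pair_dist p q.
Proof. unfold pair_dist. pose proof (metric_nonneg X d Hd (snd p) (snd q)). lra. Qed.

Lemma dist_snd_le_pair_dist p q : d (snd p) (snd q) <= 2 * pair_dist p q.
Proof. unfold pair_dist. pose proof (metric_nonneg X d Hd (fst p) (fst q)). lra. Qed.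

Lemma pair_dist_metric : is_metric (X * X) pair_dist.
Proof.
  unfold pair_dist. split; [|split].
  - intros [x y] [u v]; simpl. split.
    + intros H. pose proof (metric_nonneg X d Hd x u). pose proof (metric_nonneg X d Hd y v).
      assert (Hx : d x u = 0) by lra. assert (Hy : d y v = 0) by lra.
      apply (proj1 Hd) in Hx. apply (proj1 Hd) in Hy. subst. reflexivity.
    + intros [= -> ->]. rewrite !(metric_self X d Hd). lra.
  - intros p q. rewrite (metric_sym X d Hd (fst p)), (metric_sym X d Hd (snd p)). reflexivity.
  - intros p q r. pose proof (metric_triangle X d Hd (fst p) (fst q) (fst r)).
    pose proof (metric_triangle X d Hd (snd p) (snd q) (snd r)). lra.
Qed.

Lemma seq_converges_fst u p :
  seq_converges (X * X) pair_dist u p -> seq_converges X d (fun n => fst (u n)) (fst p).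
Proof.
  intros Hu eps Heps. destruct (Hu (eps / 2)) as [N HN]; [lra|]. exists N. intros n Hn.
  pose proof (dist_fst_le_pair_dist (u n) p). specialize (HN n Hn). lra.
Qed.

Lemma seq_converges_snd u p :
  seq_converges (X * X) pair_dist u p -> seq_converges X d (fun n => snd (u n)) (snd p).
Proof.
  intros Hu eps Heps. destruct (Hu (eps / 2)) as [N HN]; [lra|]. exists N. intros n Hn.
  pose proof (dist_snd_le_pair_dist (u n) p). specialize (HN n Hn). lra.
Qed.

Lemma seq_converges_pair u x y :
  seq_converges X d (fun n => fst (u n)) x -> seq_converges X d (fun n => snd (u n)) y ->
  seq_converges (X * X) pair_dist u (x, y).
Proof.
  intros Hx Hy eps Heps.
  destruct (Hx eps Heps) as [N1 HN1]. destruct (Hy eps Heps) as [N2 HN2].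
  exists (max N1 N2). intros n Hn. unfold pair_dist; simpl.
  specialize (HN1 n ltac:(lia)). specialize (HN2 n ltac:(lia)). lra.
Qed.

Lemma pair_dist_complete : complete_metric X d -> complete_metric (X * X) pair_dist.
Proof.
  intros Hcomplete u Hu.
  assert (Hfst : cauchy_seq X d (fun n => fst (u n))).
  { intros eps Heps. destruct (Hu (eps / 2)) as [N HN]; [lra|]. exists N. intros m n Hm Hn.
    pose proof (dist_fst_le_pair_dist (u m) (u n)). specialize (HN m n Hm Hn). lra. }
  assert (Hsnd : cauchy_seq X d (fun n => snd (u n))).
  { intros eps Heps. destruct (Hu (eps / 2)) as [N HN]; [lra|]. exists N. intros m n Hm Hn.
    pose proof (dist_snd_le_pair_dist (u m) (u n)). specialize (HN m n Hm Hn). lra. }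
  destruct (Hcomplete _ Hfst) as [x Hx]. destruct (Hcomplete _ Hsnd) as [y Hy].
  exists (x, y). exact (seq_converges_pair u x y Hx Hy).
Qed.

Lemma coupled_map_meir_keeler :
  coupled_meir_keeler -> meir_keeler (X * X) pair_dist pair_le coupled_map.
Proof.
  intros Hcontr eps Heps. destruct (Hcontr eps Heps) as [delta [Hdelta Hstep]].
  exists delta. split; [exact Hdelta|].
  assert (Hle : forall p q, pair_le p q -> eps <= pair_dist p q < eps + delta ->
                  pair_dist (coupled_map p) (coupled_map q) < eps).
  { intros [x y] [u v] [Hxu Hvy] Hb. unfold pair_dist in *; simpl in *.
    pose proof (Hstep x y u v Hxu Hvy Hb) as H1.
    assert (Hb' : eps <= (d v y + d u x) / 2 < eps + delta)
      by (rewrite (metric_sym X d Hd v), (metric_sym X d Hd u); lra).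
    pose proof (Hstep v u y x Hvy Hxu Hb') as H2.
    rewrite (metric_sym X d Hd (F v u)) in H2. lra. }
  intros p q [Hpq|Hqp] Hb; [auto|].
  rewrite (metric_sym _ _ pair_dist_metric) in Hb |- *. auto.
Qed.

Lemma coupled_map_continuous :
  continuous2 X d F -> continuous_map (X * X) pair_dist coupled_map.
Proof.
  intros Hcont [x y] eps Heps.
  destruct (Hcont x y (eps / 2)) as [d1 [Hd1 H1]]; [lra|].
  destruct (Hcont y x (eps / 2)) as [d2 [Hd2 H2]]; [lra|].
  exists (Rmin d1 d2 / 2). split; [pose proof (Rmin_glb_lt d1 d2 0 Hd1 Hd2); lra|].
  intros [u v] Hb. pose proof (Rmin_l d1 d2). pose proof (Rmin_r d1 d2).
  pose proof (dist_fst_le_pair_dist (x, y) (u, v)).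
  pose proof (dist_snd_le_pair_dist (x, y) (u, v)).
  unfold pair_dist at 1; simpl in *.
  assert (d (F x y) (F u v) < eps / 2) by (apply H1; lra).
  assert (d (F y x) (F v u) < eps / 2) by (apply H2; lra).
  lra.
Qed.

Lemma pair_le_nondecreasing_limits_above :
  (forall (xs : nat -> X) (x : X),
     (forall n, le (xs n) (xs (S n))) -> seq_converges X d xs x ->
     forall n, le (xs n) x) ->
  (forall (xs : nat -> X) (x : X),
     (forall n, le (xs (S n)) (xs n)) -> seq_converges X d xs x ->
     forall n, le x (xs n)) ->
  nondecreasing_limits_above (X * X) pair_dist pair_le.
Proof.
  intros Hinc Hdec u l Hu Hl n. split.
  - apply (Hinc (fun k => fst (u k))); [intro k; apply (Hu k) | exact (seq_converges_fst u l Hl)].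
  - apply (Hdec (fun k => snd (u k))); [intro k; apply (Hu k) | exact (seq_converges_snd u l Hl)].
Qed.

Lemma Fiter_converges x y p :
  seq_converges (X * X) pair_dist (fun n => Nat.iter n coupled_map (x, y)) p ->
  seq_converges X d (fun n => Fiter X F n x y) (fst p).
Proof.
  intros Hp eps Heps. destruct (seq_converges_fst _ _ Hp eps Heps) as [N HN].
  exists N. intros n Hn. specialize (HN n Hn). rewrite iter_coupled_map in HN. exact HN.
Qed.

End PairMetric.
End Pairs.


Theorem theorem7 (X : Type) (d : X -> X -> R) (le : X -> X -> Prop)
  (F : X -> X -> X)
  (Hmetric : is_metric X d) (Hcomplete : complete_metric X d)
  (Hpo : partial_order X le)
  (Hcontr : forall eps, 0 < eps -> exists delta, 0 < delta /\
     forall x y u v, le x u -> le v y ->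
       eps <= (d x u + d y v) / 2 < eps + delta ->
       d (F x y) (F u v) < eps)
  (H1 : mixed_monotone X le F)
  (H2 : exists x0 y0, le x0 (F x0 y0) /\ le (F y0 x0) y0)
  (H34 : continuous2 X d F \/
     ((forall (xs : nat -> X) (x : X),
         (forall n, le (xs n) (xs (S n))) -> seq_converges X d xs x ->
         forall n, le (xs n) x) /\
      (forall (xs : nat -> X) (x : X),
         (forall n, le (xs (S n)) (xs n)) -> seq_converges X d xs x ->
         forall n, le x (xs n)))) :
  exists xs ys : X, coupled_fixed_point X F xs ys /\
    (order_connected X le ->
       xs = ys /\
       (forall x y, coupled_fixed_point X F x y -> x = xs /\ y = xs) /\
       (forall x, F x x = x -> x = xs) /\
       (forall x y, seq_converges X d (fun n => Fiter X F n x y) xs)).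
Proof.
  destruct H2 as [x0 [y0 [Hx0 Hy0]]].
  set (D := pair_dist X d). set (G := coupled_map X F).
  pose proof (pair_dist_metric X d Hmetric) as HD.
  pose proof (pair_le_refl X le Hpo) as Hrefl.
  pose proof (pair_le_trans X le Hpo) as Htrans.
  pose proof (coupled_map_monotone X le F H1) as Hmono.
  pose proof (coupled_map_meir_keeler X d le F Hmetric Hcontr) as Hmk.
  assert (Hreg : continuous_map (X * X) D G \/ nondecreasing_limits_above (X * X) D (pair_le X le)).
  { destruct H34 as [Hcont | [Hinc Hdec]].
    - left. exact (coupled_map_continuous X d F Hmetric Hcont).
    - right. exact (pair_le_nondecreasing_limits_above X d le Hmetric Hinc Hdec). }
  destruct (exists_fixed_point _ D _ G HD Hrefl Htrans Hmono Hmk (x0, y0)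
              (pair_dist_complete X d Hmetric Hcomplete) Hreg (conj Hx0 Hy0))
    as [[xs ys] Hfix].
  injection Hfix as Hxs Hys.
  exists xs, ys. split; [split; assumption|]. intros Hconn.
  assert (Hasym : forall p q, asymptotic (X * X) D G p q).
  { apply (order_connected_pair_total X le); [apply Hpo | exact Hconn | | |].
    - exact (asymptotic_refl _ D G HD).
    - exact (asymptotic_trans _ D G HD).
    - exact (asymptotic_comparable _ D _ G HD Hmono Hmk). }
  assert (Hunique : forall x y, coupled_fixed_point X F x y -> (x, y) = (xs, ys)).
  { intros x y [Hx Hy]. apply (asymptotic_fixed_points_eq _ D G HD); [apply Hasym | | ].
    - unfold G, coupled_map; simpl. rewrite Hx, Hy. reflexivity.
    - unfold G, coupled_map; simpl. rewrite Hxs, Hys. reflexivity. }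
  assert (Hsym : xs = ys) by (injection (Hunique ys xs (conj Hys Hxs)); auto).
  subst ys. split; [reflexivity|]. split; [|split].
  - intros x y Hxy. injection (Hunique x y Hxy). auto.
  - intros x Hx. injection (Hunique x x (conj Hx Hx)). auto.
  - intros x y. apply (Fiter_converges X d F Hmetric x y (xs, xs)).
    apply (asymptotic_fixed_point_converges _ D G); [apply Hasym |].
    unfold G, coupled_map; simpl. rewrite Hxs. reflexivity.
Qed.
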